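(* Let $A\in\mathbb{C}^{m\times n}$ have rank $r$, $B\in\mathbb{C}^{m\times n}$ have rank $s$, and $E=B-A$. Then $$\|B^{\dagger}-A^{\dagger}\|_{F}^{2}\leq\min\big\{\alpha_{1}+\|B^{\dagger}EA^{\dagger}\|_{F}^{2},\ \alpha_{2}+\|A^{\dagger}EB^{\dagger}\|_{F}^{2}\big\},$$ where $$\alpha_{1}:=\|A^{\dagger}\|_{2}^{2}\big(\|A^{\dagger}E\|_{F}^{2}-\|A^{\dagger}EB^{\dagger}B\|_{F}^{2}\big)+\|B^{\dagger}\|_{2}^{2}\big(\|EB^{\dagger}\|_{F}^{2}-\|AA^{\dagger}EB^{\dagger}\|_{F}^{2}\big),$$ $$\alpha_{2}:=\|A^{\dagger}\|_{2}^{2}\big(\|EA^{\dagger}\|_{F}^{2}-\|BB^{\dagger}EA^{\dagger}\|_{F}^{2}\big)+\|B^{\dagger}\|_{2}^{2}\big(\|B^{\dagger}E\|_{F}^{2}-\|B^{\dagger}EA^{\dagger}A\|_{F}^{2}\big).$$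
   Context: $M^{\dagger}$ denotes the Moore–Penrose inverse of $M$, $\|\cdot\|_{2}$ the spectral norm and $\|\cdot\|_{F}$ the Frobenius norm. *)

From HB Require Import structures.
From mathcomp Require Import all_boot all_order all_algebra.
From mathcomp Require Import all_classical all_reals.
From mathcomp.real_closed Require Import complex.
Set Implicit Arguments. Unset Strict Implicit. Unset Printing Implicit Defensive.
Import Order.TTheory GRing.Theory Num.Theory.
Local Open Scope ring_scope.
Local Open Scope classical_set_scope.

Definition ctrmx (R : realType) m n (M : 'M[R[i]]_(m, n)) : 'M[R[i]]_(n, m) :=
  map_mx (fun z => z^*) M^T.

Definition penrose (R : realType) m n (A : 'M[R[i]]_(m, n)) (X : 'M[R[i]]_(n, m)) : Prop :=
  [/\ A *m X *m A = A, X *m A *m X = X,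
      ctrmx (A *m X) = A *m X & ctrmx (X *m A) = X *m A].

(* Moore--Penrose inverse: the (unique, always existing) matrix satisfying the
   Penrose equations, chosen by classical description. *)
Definition mpinv (R : realType) m n (A : 'M[R[i]]_(m, n)) : 'M[R[i]]_(n, m) :=
  xget 0 (penrose A).

Definition fro2 (R : realType) m n (M : 'M[R[i]]_(m, n)) : R :=
  \sum_(i < m) \sum_(j < n) (Normc.normc (M i j)) ^+ 2.

Definition vnorm (R : realType) n (x : 'cV[R[i]]_n) : R := Num.sqrt (fro2 x).

Definition spec (R : realType) m n (M : 'M[R[i]]_(m, n)) : R :=
  sup [set vnorm (M *m x) | x in [set x : 'cV[R[i]]_n | vnorm x = 1]].

(* Write P = A^+, Q = B^+ and E = B - A.  Then
     Q - P = - Q E P + Q (1 - A P) - (1 - Q B) P,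
   and since A P and Q B are orthogonal projectors with P (1 - A P) = 0 and
   Q^H (1 - Q B) = 0, the three terms are pairwise orthogonal for the Frobenius
   inner product.  Moreover Q = Q Q^H B^H and B^H (1 - A P) = E^H (1 - A P), so
   Q (1 - A P) = Q ((1 - A P) E Q)^H and, by Pythagoras for the projector A P,
     |Q (1 - A P)|_F^2 <= |Q|_2^2 |(1 - A P) E Q|_F^2 = |Q|_2^2 (|E Q|_F^2 - |A P E Q|_F^2).
   Symmetrically (1 - Q B) P = - (P E (1 - Q B))^H P.  This gives the first bound;
   exchanging A and B, which turns E into -E, gives the second. *)

From HB Require Import structures.
From mathcomp Require Import all_boot all_order all_algebra.
From mathcomp Require Import all_classical all_reals.
From mathcomp.real_closed Require Import complex.
From mathcomp Require Import ring lra.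
Import Order.TTheory GRing.Theory Num.Theory.
Set Implicit Arguments. Unset Strict Implicit.
Local Open Scope complex_scope.
Local Open Scope ring_scope.

Section ConjugateTranspose.
Variable R : realType.

Lemma ctrmxE m n (M : 'M[R[i]]_(m, n)) : ctrmx M = map_mx conjc M^T.
Proof. by []. Qed.

Lemma ctrmx_entry m n (M : 'M[R[i]]_(m, n)) i j : ctrmx M i j = (M j i)^*%C.
Proof. by rewrite ctrmxE !mxE. Qed.

Lemma ctrmxK m n : cancel (@ctrmx R m n) (@ctrmx R n m).
Proof. by move=> M; apply/matrixP => i j; rewrite !ctrmx_entry conjcK. Qed.

Lemma ctrmx_mul m n p (M : 'M[R[i]]_(m, n)) (N : 'M[R[i]]_(n, p)) :
  ctrmx (M *m N) = ctrmx N *m ctrmx M.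
Proof. by rewrite !ctrmxE trmx_mul map_mxM. Qed.

Lemma ctrmxD m n (M N : 'M[R[i]]_(m, n)) : ctrmx (M + N) = ctrmx M + ctrmx N.
Proof. by rewrite !ctrmxE linearD map_mxD. Qed.

Lemma ctrmxN m n (M : 'M[R[i]]_(m, n)) : ctrmx (- M) = - ctrmx M.
Proof. by rewrite !ctrmxE linearN map_mxN. Qed.

Lemma ctrmxB m n (M N : 'M[R[i]]_(m, n)) : ctrmx (M - N) = ctrmx M - ctrmx N.
Proof. by rewrite ctrmxD ctrmxN. Qed.

Lemma ctrmxZ m n (a : R) (M : 'M[R[i]]_(m, n)) : ctrmx (a%:C *: M) = a%:C *: ctrmx M.
Proof. by rewrite !ctrmxE linearZ /= map_mxZ; congr (_ *: _); apply: conjc_real. Qed.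

Lemma ctrmx0 m n : ctrmx (0 : 'M[R[i]]_(m, n)) = 0.
Proof. by rewrite !ctrmxE trmx0 map_mx0. Qed.

Lemma ctrmx1 n : ctrmx (1%:M : 'M[R[i]]_n) = 1%:M.
Proof. by rewrite !ctrmxE trmx1 map_mx1. Qed.

Lemma ctrmx_inv n (M : 'M[R[i]]_n) : ctrmx (invmx M) = invmx (ctrmx M).
Proof. by rewrite !ctrmxE trmx_inv map_invmx. Qed.

Lemma mxtrace_ctrmx n (M : 'M[R[i]]_n) : \tr (ctrmx M) = (\tr M)^*%C.
Proof. by rewrite /mxtrace rmorph_sum; apply: eq_bigr => i _; rewrite ctrmx_entry. Qed.

End ConjugateTranspose.

Section Frobenius.
Variable R : realType.

Lemma normc_ge0 (z : R[i]) : 0 <= Normc.normc z.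
Proof. by case: z => a b; apply: sqrtr_ge0. Qed.

Lemma normc_sum_le (I : Type) (r : seq I) (F : I -> R[i]) :
  Normc.normc (\sum_(i <- r) F i) <= \sum_(i <- r) Normc.normc (F i).
Proof.
elim/big_rec2: _ => [|i y1 y2 _ IH]; first by rewrite Normc.normc0.
by apply: le_trans (le_normcD _ _) _; rewrite lerD2l.
Qed.

Lemma fro2_trace m n (M : 'M[R[i]]_(m, n)) : (fro2 M)%:C = \tr (M *m ctrmx M).
Proof.
rewrite /fro2 /mxtrace rmorph_sum; apply: eq_bigr => i _.
rewrite rmorph_sum mxE; apply: eq_bigr => j _.
by rewrite ctrmx_entry rmorphXn -sqr_normc.
Qed.

Lemma fro2_ge0 m n (M : 'M[R[i]]_(m, n)) : 0 <= fro2 M.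
Proof. by apply: sumr_ge0 => i _; apply: sumr_ge0 => j _; apply: sqr_ge0. Qed.

Lemma normc_entry_le_fro2 m n (M : 'M[R[i]]_(m, n)) i j :
  Normc.normc (M i j) ^+ 2 <= fro2 M.
Proof.
have rows_ge0 (k : 'I_m) : 0 <= \sum_l Normc.normc (M k l) ^+ 2.
  by apply: sumr_ge0 => l _; apply: sqr_ge0.
rewrite /fro2 (bigD1 i) //= (bigD1 j) //= -addrA lerDl addr_ge0 //.
  by apply: sumr_ge0 => l _; apply: sqr_ge0.
by apply: sumr_ge0 => k _; apply: rows_ge0.
Qed.

Lemma fro2_eq0 m n (M : 'M[R[i]]_(m, n)) : (fro2 M == 0) = (M == 0).
Proof.
apply/eqP/eqP => [M0|->]; last by apply: complexI; rewrite fro2_trace mul0mx mxtrace0.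
apply/matrixP => i j; rewrite mxE; apply: Normc.eq0_normc.
apply/eqP; rewrite -sqrf_eq0 eq_le sqr_ge0 andbT -M0.
exact: normc_entry_le_fro2.
Qed.

Lemma fro2_0 m n : fro2 (0 : 'M[R[i]]_(m, n)) = 0.
Proof. by apply/eqP; rewrite fro2_eq0. Qed.

Lemma fro2_ctrmx m n (M : 'M[R[i]]_(m, n)) : fro2 (ctrmx M) = fro2 M.
Proof. by apply: complexI; rewrite !fro2_trace ctrmxK mxtrace_mulC. Qed.

Lemma fro2N m n (M : 'M[R[i]]_(m, n)) : fro2 (- M) = fro2 M.
Proof. by apply: complexI; rewrite !fro2_trace ctrmxN mulmxN mulNmx opprK. Qed.

Lemma fro2Z m n (a : R) (M : 'M[R[i]]_(m, n)) : fro2 (a%:C *: M) = a ^+ 2 * fro2 M.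
Proof.
apply: complexI; rewrite fro2_trace ctrmxZ -scalemxAl -scalemxAr !mxtraceZ -fro2_trace.
by rewrite rmorphM rmorphXn mulrA expr2.
Qed.

Lemma fro2D_trace m n (M N : 'M[R[i]]_(m, n)) :
  (fro2 (M + N))%:C =
    (fro2 M)%:C + (fro2 N)%:C + \tr (M *m ctrmx N) + \tr (N *m ctrmx M).
Proof. by rewrite !fro2_trace ctrmxD mulmxDl !mulmxDr !mxtraceD; ring. Qed.

Lemma fro2D_orthl m n (M N : 'M[R[i]]_(m, n)) :
  ctrmx M *m N = 0 -> fro2 (M + N) = fro2 M + fro2 N.
Proof.
move=> MN0; apply: complexI; rewrite fro2D_trace rmorphD.
rewrite mxtrace_mulC -[ctrmx N *m M]ctrmxK ctrmx_mul ctrmxK MN0 ctrmx0 mxtrace0.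
by rewrite mxtrace_mulC MN0 mxtrace0 !addr0.
Qed.

Lemma fro2D_orthr m n (M N : 'M[R[i]]_(m, n)) :
  M *m ctrmx N = 0 -> fro2 (M + N) = fro2 M + fro2 N.
Proof.
move=> MN0; rewrite -fro2_ctrmx ctrmxD fro2D_orthl; first by rewrite !fro2_ctrmx.
by rewrite ctrmxK; exact: MN0.
Qed.

Lemma fro2_lincomb m n (a b : R) (M N : 'M[R[i]]_(m, n)) :
  (fro2 (a%:C *: M + b%:C *: N))%:C =
    (a ^+ 2 * fro2 M + b ^+ 2 * fro2 N)%:C
    + (a * b)%:C * (\tr (M *m ctrmx N) + \tr (N *m ctrmx M)).
Proof.
rewrite fro2D_trace !fro2Z !ctrmxZ -!scalemxAl -!scalemxAr !scalerA !mxtraceZ.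
by rewrite !rmorphM !rmorphD; ring.
Qed.

Lemma fro2_inner_le m n (M N : 'M[R[i]]_(m, n)) (t : R) :
  \tr (M *m ctrmx N) = t%:C -> t ^+ 2 <= fro2 M * fro2 N.
Proof.
move=> tMN; have [N0|N_neq0] := eqVneq N 0.
  suff -> : t = 0 by rewrite expr0n mulr_ge0 ?fro2_ge0.
  by apply: complexI; rewrite -tMN N0 ctrmx0 mulmx0 mxtrace0.
have N_gt0 : 0 < fro2 N by rewrite lt_def fro2_eq0 N_neq0 fro2_ge0.
have tNM : \tr (N *m ctrmx M) = t%:C.
  by rewrite -[N]ctrmxK -ctrmx_mul mxtrace_ctrmx tMN conjc_real.
have := fro2_ge0 ((fro2 N)%:C *: M + (- t)%:C *: N).
have := fro2_lincomb (fro2 N) (- t) M N.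
rewrite tMN tNM -rmorphD -rmorphM -rmorphD => /complexI ->.
nra.
Qed.

Definition ortho_proj n (H : 'M[R[i]]_n) := ctrmx H = H /\ H *m H = H.

Lemma ortho_projC n (H : 'M[R[i]]_n) : ortho_proj H -> ortho_proj (1%:M - H).
Proof.
case=> cH HH; split; first by rewrite ctrmxB ctrmx1 cH.
by rewrite mulmxBl mul1mx mulmxBr mulmx1 HH subrr subr0.
Qed.

Lemma ortho_proj_mulC n (H : 'M[R[i]]_n) : ortho_proj H -> H *m (1%:M - H) = 0.
Proof. by case=> _ HH; rewrite mulmxBr mulmx1 HH subrr. Qed.

Lemma fro2_projl m n (H : 'M[R[i]]_m) (M : 'M[R[i]]_(m, n)) :
  ortho_proj H -> fro2 M = fro2 (H *m M) + fro2 ((1%:M - H) *m M).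
Proof.
move=> pH; rewrite -fro2D_orthl; first by rewrite -mulmxDl addrC subrK mul1mx.
case: pH (ortho_proj_mulC pH) => cH _ HC.
by rewrite ctrmx_mul cH mulmxA -(mulmxA _ H) HC mulmx0 mul0mx.
Qed.

Lemma fro2_projr m n (H : 'M[R[i]]_n) (M : 'M[R[i]]_(m, n)) :
  ortho_proj H -> fro2 M = fro2 (M *m H) + fro2 (M *m (1%:M - H)).
Proof.
move=> pH; rewrite -fro2D_orthr; first by rewrite -mulmxDr addrC subrK mulmx1.
case: (ortho_projC pH) (ortho_proj_mulC pH) => cHC _ HC.
by rewrite ctrmx_mul cHC mulmxA -(mulmxA M H) HC mulmx0 mul0mx.
Qed.

End Frobenius.

Section MoorePenrose.
Variable R : realType.

Lemma mulmx_ctrmx_unit p q (M : 'M[R[i]]_(p, q)) : row_free M -> M *m ctrmx M \in unitmx.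
Proof.
move=> freeM; rewrite -row_free_unit; apply: inj_row_free => v vMM0.
have vM0 : v *m M = 0.
  apply/eqP; rewrite -fro2_eq0; apply/eqP/complexI.
  by rewrite fro2_trace ctrmx_mul mulmxA -(mulmxA v) vMM0 mul0mx mxtrace0.
by apply: (row_free_inj freeM); rewrite /= vM0 mul0mx.
Qed.

Lemma penrose_exists_factor m n r (F : 'M[R[i]]_(m, r)) (G : 'M[R[i]]_(r, n)) :
  row_free G -> row_free (ctrmx F) -> exists X, penrose (F *m G) X.
Proof.
move=> freeG freeF.
have unitG := mulmx_ctrmx_unit freeG.
have unitF := mulmx_ctrmx_unit freeF; rewrite ctrmxK in unitF.
set Kg := invmx (G *m ctrmx G); set Kf := invmx (ctrmx F *m F).
have cKg : ctrmx Kg = Kg by rewrite /Kg ctrmx_inv ctrmx_mul ctrmxK.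
have cKf : ctrmx Kf = Kf by rewrite /Kf ctrmx_inv ctrmx_mul ctrmxK.
have KgK p (Y : 'M_(r, p)) : G *m (ctrmx G *m (Kg *m Y)) = Y.
  by rewrite /Kg !mulmxA mulmxV // mul1mx.
have KfK p (Y : 'M_(r, p)) : Kf *m (ctrmx F *m (F *m Y)) = Y.
  by rewrite /Kf (mulmxA (ctrmx F)) mulmxA mulVmx // mul1mx.
exists (ctrmx G *m Kg *m Kf *m ctrmx F).
have AX : F *m G *m (ctrmx G *m Kg *m Kf *m ctrmx F) = F *m Kf *m ctrmx F.
  by rewrite -!mulmxA KgK.
have XA : ctrmx G *m Kg *m Kf *m ctrmx F *m (F *m G) = ctrmx G *m Kg *m G.
  by rewrite -!mulmxA KfK.
split.
- by rewrite AX -!mulmxA KfK.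
- by rewrite XA -!mulmxA KgK.
- by rewrite AX !ctrmx_mul ctrmxK cKf mulmxA.
- by rewrite XA !ctrmx_mul ctrmxK cKg mulmxA.
Qed.

Lemma penrose_exists m n (A : 'M[R[i]]_(m, n)) : exists X, penrose A X.
Proof.
rewrite -(mulmx_base A); apply: penrose_exists_factor; first exact: row_base_free.
by rewrite /row_free ctrmxE mxrank_map mxrank_tr; apply: col_base_full.
Qed.

Lemma mpinvP m n (A : 'M[R[i]]_(m, n)) : penrose A (mpinv A).
Proof. exact: xgetPex (penrose_exists A). Qed.

End MoorePenrose.

Lemma penrose_sym (R : realType) m n (A : 'M[R[i]]_(m, n)) X :
  penrose A X -> penrose X A.
Proof. by case. Qed.

Lemma penrose_ortho_proj (R : realType) m n (A : 'M[R[i]]_(m, n)) X :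
  penrose A X -> ortho_proj (A *m X).
Proof. by case=> AXA _ cAX _; split; rewrite // mulmxA AXA. Qed.

Section PenroseIdentities.
Variables (R : realType) (m n : nat) (A : 'M[R[i]]_(m, n)) (X : 'M[R[i]]_(n, m)).
Hypothesis AX : penrose A X.

Lemma penrose_mul_projC : X *m (1%:M - A *m X) = 0.
Proof. by case: AX => _ XAX _ _; rewrite mulmxBr mulmx1 mulmxA XAX subrr. Qed.

Lemma penrose_ctrmx_projC : ctrmx A *m (1%:M - A *m X) = 0.
Proof.
have [cH _] := ortho_projC (penrose_ortho_proj AX).
case: AX => AXA _ _ _; rewrite -cH -ctrmx_mul mulmxBl mul1mx AXA subrr.
exact: ctrmx0.
Qed.

Lemma penrose_projC_ctrmx : (1%:M - X *m A) *m ctrmx A = 0.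
Proof.
have [cH _] := ortho_projC (penrose_ortho_proj (penrose_sym AX)).
case: AX => AXA _ _ _; rewrite -cH -ctrmx_mul mulmxBr mulmx1 mulmxA AXA subrr.
exact: ctrmx0.
Qed.

Lemma penrose_factorl : X = X *m ctrmx X *m ctrmx A.
Proof. by case: AX => _ XAX cAX _; rewrite -mulmxA -ctrmx_mul cAX mulmxA XAX. Qed.

Lemma penrose_factorr : X = ctrmx A *m ctrmx X *m X.
Proof. by case: AX => _ XAX _ cXA; rewrite -ctrmx_mul cXA XAX. Qed.

End PenroseIdentities.

Section SpectralNorm.
Variable R : realType.

Lemma spec_has_ubound m n (M : 'M[R[i]]_(m, n)) :
  has_ubound [set vnorm (M *m x) | x in [set x : 'cV[R[i]]_n | vnorm x = 1]].
Proof.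
exists (Num.sqrt (\sum_i (\sum_j Normc.normc (M i j)) ^+ 2)) => _ [x /= x1 <-].
have fx1 : fro2 x = 1 by rewrite -(sqr_sqrtr (fro2_ge0 x)) -/(vnorm x) x1 expr1n.
have x_le1 k : Normc.normc (x k 0) <= 1.
  by have := normc_entry_le_fro2 x k 0; have := normc_ge0 (x k 0); rewrite fx1; nra.
rewrite /vnorm ler_sqrt; last by apply: sumr_ge0 => i _; apply: sqr_ge0.
apply: ler_sum => i _; rewrite big_ord1 mxE.
have Mx_le : Normc.normc (\sum_j M i j * x j 0) <= \sum_j Normc.normc (M i j).
  apply: le_trans (normc_sum_le _ _) _; apply: ler_sum => j _; rewrite Normc.normcM.
  by have := x_le1 j; have := normc_ge0 (M i j); have := normc_ge0 (x j 0); nra.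
by have := normc_ge0 (\sum_j M i j * x j 0); nra.
Qed.

Lemma fro2_mulmx_col_le m n (M : 'M[R[i]]_(m, n)) (x : 'cV[R[i]]_n) :
  fro2 (M *m x) <= spec M ^+ 2 * fro2 x.
Proof.
have [->|x_neq0] := eqVneq x 0; first by rewrite mulmx0 !fro2_0 mulr0.
have x_gt0 : 0 < fro2 x by rewrite lt_def fro2_eq0 x_neq0 fro2_ge0.
have vnorm2 : vnorm x ^+ 2 = fro2 x by rewrite sqr_sqrtr // fro2_ge0.
set y := ((vnorm x)^-1)%:C *: x.
have y1 : vnorm y = 1.
  by rewrite /vnorm fro2Z exprVn vnorm2 mulVf ?sqrtr1 // gt_eqF.
have My_le : vnorm (M *m y) <= spec M by apply: (ub_le_sup (spec_has_ubound M)); exists y.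
have My2 : vnorm (M *m y) ^+ 2 = fro2 (M *m x) / fro2 x.
  by rewrite sqr_sqrtr ?fro2_ge0 // -scalemxAr fro2Z exprVn vnorm2 mulrC.
rewrite -ler_pdivrMr // -My2 lerXn2r ?nnegrE ?sqrtr_ge0 //.
exact: le_trans (sqrtr_ge0 _) My_le.
Qed.

Lemma fro2_mulmxl_le m n p (M : 'M[R[i]]_(m, n)) (N : 'M[R[i]]_(n, p)) :
  fro2 (M *m N) <= spec M ^+ 2 * fro2 N.
Proof.
have fro2_cols q r (Y : 'M[R[i]]_(q, r)) : fro2 Y = \sum_j fro2 (col j Y).
  rewrite /fro2 exchange_big; apply: eq_bigr => j _; apply: eq_bigr => i _.
  by rewrite big_ord1 mxE.
rewrite !fro2_cols mulr_sumr; apply: ler_sum => j _.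
by rewrite !colE -mulmxA fro2_mulmx_col_le.
Qed.

(* |Y N|^2 = <Y, Y N N^H> <= |Y| |Y N N^H| by Cauchy-Schwarz, and
   |Y N N^H| = |N (Y N)^H| <= |N|_2 |Y N| by the left bound. *)
Lemma fro2_mulmxr_le p m n (Y : 'M[R[i]]_(p, m)) (N : 'M[R[i]]_(m, n)) :
  fro2 (Y *m N) <= fro2 Y * spec N ^+ 2.
Proof.
set t := fro2 (Y *m N).
have inner : \tr (Y *m ctrmx (Y *m N *m ctrmx N)) = t%:C.
  by rewrite ctrmx_mul ctrmxK mulmxA fro2_trace.
have YNN_le : fro2 (Y *m N *m ctrmx N) <= spec N ^+ 2 * t.
  rewrite -fro2_ctrmx ctrmx_mul ctrmxK.
  by apply: le_trans (fro2_mulmxl_le _ _) _; rewrite fro2_ctrmx.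
have [t0|t_neq0] := eqVneq t 0; first by rewrite t0 mulr_ge0 ?fro2_ge0 ?sqr_ge0.
have t_gt0 : 0 < t by rewrite lt_def t_neq0 fro2_ge0.
rewrite -(ler_pM2l t_gt0) -expr2; apply: le_trans (fro2_inner_le inner) _.
by rewrite mulrCA; apply: ler_wpM2l; [exact: fro2_ge0 | rewrite mulrC].
Qed.

End SpectralNorm.

Lemma pinv_sub_decomp (R : realType) m n (A B : 'M[R[i]]_(m, n)) (P Q : 'M[R[i]]_(n, m)) :
  Q - P = - (Q *m (B - A) *m P) + Q *m (1%:M - A *m P) - (1%:M - Q *m B) *m P.
Proof.
rewrite mulmxBr mulmxBl mulmxBr mulmxBl mulmx1 mul1mx !mulmxA !opprB.
by rewrite [_ - _ + (Q - _)]addrC !subrKA.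
Qed.

Section Perturbation.
Variables (R : realType) (m n : nat) (A B : 'M[R[i]]_(m, n)) (P Q : 'M[R[i]]_(n, m)).
Hypotheses (AP : penrose A P) (BQ : penrose B Q).
Local Notation E := (B - A).

Lemma fro2_sub_penrose :
  fro2 (Q - P) =
    fro2 (Q *m E *m P) + fro2 (Q *m (1%:M - A *m P)) + fro2 ((1%:M - Q *m B) *m P).
Proof.
have [cAPC _] := ortho_projC (penrose_ortho_proj AP).
rewrite (pinv_sub_decomp A B) fro2D_orthl; last first.
  have -> : - (Q *m E *m P) + Q *m (1%:M - A *m P) = Q *m (1%:M - A *m P - E *m P).
    by rewrite [in RHS]mulmxBr [in RHS]mulmxA addrC.
  rewrite ctrmx_mul mulmxN mulmxA -(mulmxA _ (ctrmx Q)).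
  by rewrite (penrose_ctrmx_projC (penrose_sym BQ)) mulmx0 mul0mx oppr0.
rewrite fro2D_orthr ?fro2N // ctrmx_mul cAPC mulNmx -!mulmxA (mulmxA P).
by rewrite (penrose_mul_projC AP) mul0mx !mulmx0 oppr0.
Qed.

Lemma fro2_mul_projC_le :
  fro2 (Q *m (1%:M - A *m P)) <= spec Q ^+ 2 * (fro2 (E *m Q) - fro2 (A *m P *m E *m Q)).
Proof.
have [cAPC _] := ortho_projC (penrose_ortho_proj AP).
have -> : Q *m (1%:M - A *m P) = Q *m ctrmx ((1%:M - A *m P) *m (E *m Q)).
  rewrite {1}(penrose_factorl BQ) !ctrmx_mul cAPC -!mulmxA; congr (_ *m (_ *m _)).
  by rewrite ctrmxB mulmxBl (penrose_ctrmx_projC AP) subr0.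
apply: le_trans (fro2_mulmxl_le _ _) _; rewrite fro2_ctrmx.
rewrite [fro2 (E *m Q)](fro2_projl _ (penrose_ortho_proj AP)) !mulmxA.
by rewrite [_ + fro2 _]addrC addrK.
Qed.

Lemma fro2_projC_mul_le :
  fro2 ((1%:M - Q *m B) *m P) <= spec P ^+ 2 * (fro2 (P *m E) - fro2 (P *m E *m Q *m B)).
Proof.
have [cQBC _] := ortho_projC (penrose_ortho_proj (penrose_sym BQ)).
have -> : (1%:M - Q *m B) *m P = - (ctrmx (P *m E *m (1%:M - Q *m B)) *m P).
  have QBCA : (1%:M - Q *m B) *m ctrmx A = - ((1%:M - Q *m B) *m ctrmx E).
    by rewrite ctrmxB mulmxBr (penrose_projC_ctrmx BQ) sub0r opprK.
  by rewrite {1}(penrose_factorr AP) !ctrmx_mul cQBC !mulmxA QBCA !mulNmx.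
rewrite fro2N mulrC; apply: le_trans (fro2_mulmxr_le _ _) _; rewrite fro2_ctrmx.
rewrite [fro2 (P *m E)](fro2_projr _ (penrose_ortho_proj (penrose_sym BQ))) !mulmxA.
by rewrite [_ + fro2 _]addrC addrK.
Qed.

Lemma fro2_sub_penrose_le :
  fro2 (Q - P) <=
    spec P ^+ 2 * (fro2 (P *m E) - fro2 (P *m E *m Q *m B))
    + spec Q ^+ 2 * (fro2 (E *m Q) - fro2 (A *m P *m E *m Q))
    + fro2 (Q *m E *m P).
Proof.
rewrite fro2_sub_penrose; have := fro2_mul_projC_le; have := fro2_projC_mul_le.
lra.
Qed.

End Perturbation.

Theorem theorem3p2 (R : realType) (m n r s : nat) (A B : 'M[R[i]]_(m, n)) :
  \rank A = r -> \rank B = s ->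
  let E := B - A in
  let alpha1 :=
    spec (mpinv A) ^+ 2 * (fro2 (mpinv A *m E) - fro2 (mpinv A *m E *m mpinv B *m B))
    + spec (mpinv B) ^+ 2 * (fro2 (E *m mpinv B) - fro2 (A *m mpinv A *m E *m mpinv B)) in
  let alpha2 :=
    spec (mpinv A) ^+ 2 * (fro2 (E *m mpinv A) - fro2 (B *m mpinv B *m E *m mpinv A))
    + spec (mpinv B) ^+ 2 * (fro2 (mpinv B *m E) - fro2 (mpinv B *m E *m mpinv A *m A)) in
  fro2 (mpinv B - mpinv A) <=
    Num.min (alpha1 + fro2 (mpinv B *m E *m mpinv A))
            (alpha2 + fro2 (mpinv A *m E *m mpinv B)).
Proof.
move=> _ _; cbv zeta; rewrite le_min; apply/andP; split.
  exact: fro2_sub_penrose_le (mpinvP A) (mpinvP B).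
have := fro2_sub_penrose_le (mpinvP B) (mpinvP A).
rewrite -[A - B]opprB -[mpinv A - mpinv B]opprB !(mulmxN, mulNmx) !fro2N.
by rewrite [X in _ <= X + _]addrC.
Qed.
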